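(* Let $\alpha_1,\alpha_2,\beta_2,\beta_3,\beta_4,\delta_1,\delta_2,\delta_4>0$ and consider the autonomous system $$u_1'=u_1(1-u_1-\alpha_1u_2-\delta_1u_3),\ u_2'=\beta_2u_2(1-u_2-\alpha_2u_1-\delta_2u_4),\ u_3'=\beta_3(u_2-u_3),\ u_4'=\beta_4(1-u_4-\delta_4u_4u_2).$$ It has the following steady states, with the stated linear stability properties: SS1: $(0,0,0,1)$ is unstable for all parameter values. SS2: $(1,0,0,1)$ is stable iff $\alpha_2+\delta_2>1$. SS3: $(0,\hat u_{2\pm},\hat u_{2\pm},[1+\delta_4\hat u_{2\pm}]^{-1})$ with $\hat u_{2\pm}=[\delta_4-1\pm\sqrt{(1+\delta_4)^2-4\delta_2\delta_4}]/(2\delta_4)$. The one with $\hat u_{2-}$ is unstable for all parameter values; the one with $\hat u_{2+}$ is stable iff $\delta_2<\frac{(\alpha_1+\delta_1+\delta_4)(\alpha_1+\delta_1-1)}{(\alpha_1+\delta_1)^2}$, or $\frac{(\alpha_1+\delta_1+\delta_4)(\alpha_1+\delta_1-1)}{(\alpha_1+\delta_1)^2}\le\delta_2<\frac{(1+\delta_4)^2}{4\delta_4}$ and $\frac1{\delta_4}<\frac{\alpha_1+\delta_1-2}{\alpha_1+\delta_1}$. SS4: $(1-(\alpha_1+\delta_1)\tilde u_{2\pm},\tilde u_{2\pm},\tilde u_{2\pm},[1+\delta_4\tilde u_{2\pm}]^{-1})$ where, writing $A=1-\alpha_2(\alpha_1+\delta_1)$, $$\tilde u_{2\pm}=\frac{-A-\delta_4(\alpha_2-1)\pm\sqrt{[A-\delta_4(\alpha_2-1)]^2-4\delta_2\delta_4A}}{2\delta_4A}.$$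 The one with $\tilde u_{2-}$ is not stable for any parameter values for which all its components are positive. The one with $\tilde u_{2+}$ (write $\tilde u_2=\tilde u_{2+}$) is stable iff $0<(\alpha_1+\delta_1)\tilde u_{2+}<1$, $0<\delta_2<\frac{[A-\delta_4(\alpha_2-1)]^2}{4\delta_4A}$ and $c_1c_2c_3>c_3^2c_0+c_1^2$, where $c_3=1-(\alpha_1+\delta_1)\tilde u_2+\beta_3+\beta_2\tilde u_2+\beta_4(1+\delta_4\tilde u_2)$, $c_2=\beta_3[\beta_2\tilde u_2+\beta_4(1+\delta_4\tilde u_2)]+[1-(\alpha_1+\delta_1)\tilde u_2][\beta_3+\beta_4(1+\delta_4\tilde u_2)+\beta_2\tilde u_2(1-\alpha_2\alpha_1)]+\frac{\beta_2\beta_4\tilde u_2}{1+\delta_4\tilde u_2}[(1+\delta_4\tilde u_2)^2-\delta_2\delta_4]$, $c_1=[1-(\alpha_1+\delta_1)\tilde u_2]\Big[\frac{\beta_2\beta_4\tilde u_2}{1+\delta_4\tilde u_2}[(1+\delta_4\tilde u_2)^2(1-\alpha_2\alpha_1)-\delta_2\delta_4]+\beta_3\beta_4(1+\delta_4\tilde u_2)\Big]+\beta_2\beta_3\tilde u_2[1-(\alpha_1+\delta_1)\tilde u_2]A+\frac{\beta_2\beta_3\beta_4\tilde u_2}{1+\delta_4\tilde u_2}[(1+\delta_4\tilde u_2)^2-\delta_2\delta_4]$, $c_0=\frac{\beta_2\beta_3\beta_4\tilde u_2}{1+\delta_4\tilde u_2}[1-(\alpha_1+\delta_1)\tilde u_2][(1+\delta_4\tilde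 u_2)^2A-\delta_2\delta_4]$.
   Context: ''Stable'' means linearly stable: all eigenvalues of the Jacobian of the right-hand side at the steady state have negative real part; ''unstable'' means the Jacobian has an eigenvalue with positive real part. *)

From HB Require Import structures.
From mathcomp Require Import all_boot all_order all_algebra.
From mathcomp Require Import all_classical all_reals all_analysis.
From mathcomp Require Import complex.
Set Implicit Arguments. Unset Strict Implicit. Unset Printing Implicit Defensive.
Import Order.TTheory GRing.Theory Num.Theory.
Local Open Scope ring_scope.

Section Model.
Variable R : realType.

(* A state (u1,u2,u3,u4) is a function 'I_4 -> R; coordinate k (0-based) is u_{k+1}. *)
Definition pt4 (x1 x2 x3 x4 : R) : 'I_4 -> R :=
  fun i => nth 0 [:: x1; x2; x3; x4] i.

Definition rhs (a1 a2 b2 b3 b4 d1 d2 d4 : R) (u : 'I_4 -> R) (i : 'I_4) : R :=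
  let u1 := u (inord 0) in let u2 := u (inord 1) in
  let u3 := u (inord 2) in let u4 := u (inord 3) in
  match val i with
  | 0 => u1 * (1 - u1 - a1 * u2 - d1 * u3)
  | 1 => b2 * u2 * (1 - u2 - a2 * u1 - d2 * u4)
  | 2 => b3 * (u2 - u3)
  | _ => b4 * (1 - u4 - d4 * u4 * u2)
  end.

Definition upd (u : 'I_4 -> R) (j : 'I_4) (t : R) : 'I_4 -> R :=
  fun k => if k == j then t else u k.

Definition jacobian (F : ('I_4 -> R) -> 'I_4 -> R) (u : 'I_4 -> R) : 'M[R]_4 :=
  \matrix_(i < 4, j < 4) derive1 (fun t => F (upd u j t) i) (u j).

Definition steady_state (F : ('I_4 -> R) -> 'I_4 -> R) (u : 'I_4 -> R) : Prop :=
  forall i, F u i = 0.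

Definition cplx_mx (M : 'M[R]_4) : 'M[R[i]]_4 := map_mx (fun x => (x%:C)%C) M.

Definition lin_stable F u : Prop :=
  forall z : R[i], eigenvalue (cplx_mx (jacobian F u)) z -> complex.Re z < 0.

Definition lin_unstable F u : Prop :=
  exists z : R[i], eigenvalue (cplx_mx (jacobian F u)) z /\ 0 < complex.Re z.

End Model.

(* The eigenvalues of the complexified Jacobian are the roots of its characteristic
   polynomial, a real monic quartic. By the fundamental theorem of algebra such a
   quartic is a product of two real monic quadratics, and z^2 + p z + q has all its
   roots in the open left half-plane iff p > 0 and q > 0; multiplying out gives the
   Routh-Hurwitz criterion k3, k1, k0 > 0 and k1^2 + k3^2 k0 < k1 k2 k3 for
   z^4 + k3 z^3 + k2 z^2 + k1 z + k0.
   At SS1, SS2 and SS3 a species is absent, its row of the Jacobian vanishes off the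
   diagonal and the characteristic polynomial factors explicitly: stability is read
   off the signs of the coefficients of the two factors, instability off a positive
   real root of one of them. At SS4 the Routh-Hurwitz criterion is applied to c3, c2,
   c1, c0; the u2-nullcline (1 - u2 - a2 u1)(1 + d4 u2) = d2 turns c0 into
   b2 b3 b4 u2 u1 (+/- sqrt D), whose sign rules out the minus branch and yields the
   conditions on the plus branch. *)

From Pilot Require Import Defs.
From HB Require Import structures.
From mathcomp Require Import all_boot all_order all_algebra.
From mathcomp Require Import all_classical all_reals all_analysis.
From mathcomp Require Import complex.
From mathcomp Require Import ring lra.
Import Order.TTheory GRing.Theory Num.Theory.
Local Open Scope ring_scope.
Set Implicit Arguments. Unset Strict Implicit.

Section PrincipalMinors.
Variable F : comNzRingType.
Implicit Types m : nat -> nat -> F.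

Definition minor2 m i j : F := m i i * m j j - m i j * m j i.

Definition minor3 m i j k : F :=
  m i i * (m j j * m k k - m j k * m k j) - m i j * (m j i * m k k - m j k * m k i)
  + m i k * (m j i * m k j - m j j * m k i).

Definition pminors1 m : F := m 0 0 + m 1 1 + m 2 2 + m 3 3.

Definition pminors2 m : F :=
  minor2 m 0 1 + minor2 m 0 2 + minor2 m 0 3 + minor2 m 1 2 + minor2 m 1 3 + minor2 m 2 3.

Definition pminors3 m : F :=
  minor3 m 0 1 2 + minor3 m 0 1 3 + minor3 m 0 2 3 + minor3 m 1 2 3.

Definition pminors4 m : F :=
    m 0 0 * m 1 1 * m 2 2 * m 3 3 - m 0 0 * m 1 1 * m 2 3 * m 3 2
   - m 0 0 * m 1 2 * m 2 1 * m 3 3 + m 0 0 * m 1 2 * m 2 3 * m 3 1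
   + m 0 0 * m 1 3 * m 2 1 * m 3 2 - m 0 0 * m 1 3 * m 2 2 * m 3 1
   - m 0 1 * m 1 0 * m 2 2 * m 3 3 + m 0 1 * m 1 0 * m 2 3 * m 3 2
   + m 0 1 * m 1 2 * m 2 0 * m 3 3 - m 0 1 * m 1 2 * m 2 3 * m 3 0
   - m 0 1 * m 1 3 * m 2 0 * m 3 2 + m 0 1 * m 1 3 * m 2 2 * m 3 0
   + m 0 2 * m 1 0 * m 2 1 * m 3 3 - m 0 2 * m 1 0 * m 2 3 * m 3 1
   - m 0 2 * m 1 1 * m 2 0 * m 3 3 + m 0 2 * m 1 1 * m 2 3 * m 3 0
   + m 0 2 * m 1 3 * m 2 0 * m 3 1 - m 0 2 * m 1 3 * m 2 1 * m 3 0
   - m 0 3 * m 1 0 * m 2 1 * m 3 2 + m 0 3 * m 1 0 * m 2 2 * m 3 1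
   + m 0 3 * m 1 1 * m 2 0 * m 3 2 - m 0 3 * m 1 1 * m 2 2 * m 3 0
   - m 0 3 * m 1 2 * m 2 0 * m 3 1 + m 0 3 * m 1 2 * m 2 1 * m 3 0.

Lemma det_mx4 m : \det (\matrix_(i < 4, j < 4) m i j) = pminors4 m.
Proof.
rewrite /pminors4 (expand_det_row _ ord0) !big_ord_recl big_ord0 /cofactor.
do 2 rewrite !(expand_det_row _ ord0) !big_ord_recl !big_ord0 /cofactor.
by rewrite !det_mx11 !mxE /= /bump /=; ring.
Qed.

Lemma det_mx4_sub_scalar m (z : F) :
  \det (\matrix_(i < 4, j < 4) (m i j - z *+ (i == j)%N)) =
  z ^+ 4 - pminors1 m * z ^+ 3 + pminors2 m * z ^+ 2 - pminors3 m * z + pminors4 m.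
Proof.
rewrite (det_mx4 (fun i j => m i j - z *+ (i == j)%N)).
by rewrite /pminors1 /pminors2 /pminors3 /pminors4 /minor2 /minor3 /= !mulr1n !mulr0n; ring.
Qed.

End PrincipalMinors.

Lemma pminors_rmorph (F G : comNzRingType) (f : {rmorphism F -> G}) (m : nat -> nat -> F) :
  [/\ pminors1 (fun i j => f (m i j)) = f (pminors1 m),
      pminors2 (fun i j => f (m i j)) = f (pminors2 m),
      pminors3 (fun i j => f (m i j)) = f (pminors3 m) &
      pminors4 (fun i j => f (m i j)) = f (pminors4 m)].
Proof.
by split; rewrite /pminors1 /pminors2 /pminors3 /pminors4 /minor2 /minor3
  !(rmorphD, rmorphN, rmorphM).
Qed.

Section RealQuadratics.
Variable R : rcfType.

Lemma quadratic_root_of_discr (a b c r x : R) :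
  a != 0 -> r ^+ 2 = b ^+ 2 - 4 * a * c -> 2 * a * x + b = r ->
  a * x ^+ 2 + b * x + c = 0.
Proof.
move=> a_neq0 r_sq r_def.
have : 4 * a * (a * x ^+ 2 + b * x + c) = 0.
  by rewrite -(subrr (r ^+ 2)) [X in _ - X]r_sq -r_def; ring.
by move/eqP; rewrite !mulf_eq0 pnatr_eq0 (negPf a_neq0) => /eqP.
Qed.

Lemma quadratic_pos_root (r t : R) : t < 0 -> exists2 l, 0 < l & l ^+ 2 + r * l + t = 0.
Proof.
move=> t_lt0; have D_ge0 : 0 <= r ^+ 2 - 4 * t by nra.
have sD_ge0 := sqrtr_ge0 (r ^+ 2 - 4 * t).
have sD_sq := sqr_sqrtr D_ge0; set sD := Num.sqrt _ in sD_ge0 sD_sq.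
exists ((- r + sD) / 2).
  suff : r < sD by lra.
  have [r_lt0|r_ge0] := ltrP r 0; first lra.
  by rewrite -(ltr_pXn2r (_ : 0 < 2)%N) ?nnegrE //; lra.
rewrite -[_ ^+ 2]mul1r.
by apply: (quadratic_root_of_discr (r := sD)); [exact: oner_neq0|rewrite sD_sq; ring|field].
Qed.

Lemma lt_sqr_or_neg (m r : R) :
  0 <= r -> (m < r /\ 0 < r) <-> (m ^+ 2 < r ^+ 2 \/ (0 < r /\ m < 0)).
Proof.
move=> r_ge0; split=> [[m_lt_r r_gt0]|[sqr_lt|[r_gt0 m_lt0]]].
- by have [m_lt0|m_ge0] := ltrP m 0; [right|left; nra].
- by have := sqr_ge0 m; split; nra.
- by split; lra.
Qed.

End RealQuadratics.

Section Hurwitz.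
Variable R : rcfType.
Local Open Scope complex_scope.

Definition quadratic (p q : R) (z : R[i]) : R[i] := z ^+ 2 + p%:C * z + q%:C.

Definition quartic (k3 k2 k1 k0 : R) (z : R[i]) : R[i] :=
  z ^+ 4 + k3%:C * z ^+ 3 + k2%:C * z ^+ 2 + k1%:C * z + k0%:C.

Definition char4 (m : nat -> nat -> R) : R[i] -> R[i] :=
  quartic (- pminors1 m) (pminors2 m) (- pminors3 m) (pminors4 m).

Definition hurwitz (p : R[i] -> R[i]) : Prop := forall z, p z = 0 -> complex.Re z < 0.

Lemma quadraticE (p q a b : R) :
  quadratic p q (Complex a b) = Complex (a ^+ 2 - b ^+ 2 + p * a + q) (2 * a * b + p * b).
Proof. by rewrite /quadratic !exprS expr0; congr Complex; rewrite /=; ring. Qed.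

Lemma quarticE (k3 k2 k1 k0 a b : R) :
  quartic k3 k2 k1 k0 (Complex a b) =
  Complex (a ^+ 4 - 6 * a ^+ 2 * b ^+ 2 + b ^+ 4 + k3 * (a ^+ 3 - 3 * a * b ^+ 2)
             + k2 * (a ^+ 2 - b ^+ 2) + k1 * a + k0)
          (4 * a ^+ 3 * b - 4 * a * b ^+ 3 + k3 * (3 * a ^+ 2 * b - b ^+ 3)
             + k2 * (2 * a * b) + k1 * b).
Proof. by rewrite /quartic !exprS expr0; congr Complex; rewrite /=; ring. Qed.

Lemma quartic_real (k3 k2 k1 k0 l : R) :
  quartic k3 k2 k1 k0 l%:C = (l ^+ 4 + k3 * l ^+ 3 + k2 * l ^+ 2 + k1 * l + k0)%:C.
Proof. by rewrite /quartic !(rmorphD, rmorphM, rmorphXn). Qed.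

Lemma quadratic_real (p q l : R) : quadratic p q l%:C = (l ^+ 2 + p * l + q)%:C.
Proof. by rewrite /quadratic !(rmorphD, rmorphM, rmorphXn). Qed.

Lemma hurwitz_quadratic (p q : R) : hurwitz (quadratic p q) <-> 0 < p /\ 0 < q.
Proof.
split => [H|[p_gt0 q_gt0] [a b]]; last first.
  rewrite quadraticE => -[re_eq im_eq] /=.
  have [b0|b_neq0] := eqVneq b 0; first by subst b; rewrite !expr2 in re_eq; nra.
  have : b * (2 * a + p) = 0 by rewrite -im_eq; ring.
  by move/eqP; rewrite mulf_eq0 (negPf b_neq0) /= => /eqP; lra.
have [D_ge0|D_lt0] := lerP 0 (p ^+ 2 - 4 * q).
  have sD_ge0 := sqrtr_ge0 (p ^+ 2 - 4 * q).
  have sD_sq := sqr_sqrtr D_ge0; set sD := Num.sqrt _ in sD_ge0 sD_sq.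
  have root : ((- p + sD) / 2) ^+ 2 + p * ((- p + sD) / 2) + q = 0.
    rewrite -[_ ^+ 2]mul1r.
    by apply: (quadratic_root_of_discr (r := sD)); [exact: oner_neq0|rewrite sD_sq; ring|field].
  have : (- p + sD) / 2 < 0 by apply: (H ((- p + sD) / 2)%:C); rewrite quadratic_real root.
  by split; nra.
have sD_sq : Num.sqrt (- (p ^+ 2 - 4 * q)) ^+ 2 = - (p ^+ 2 - 4 * q).
  by apply: sqr_sqrtr; lra.
set sD := Num.sqrt _ in sD_sq.
have : - p / 2 < 0.
  apply: (H (Complex (- p / 2) (sD / 2))); rewrite quadraticE.
  by rewrite !expr_div_n sD_sq; congr Complex; field.
by split; nra.
Qed.

Definition quartic_factors (k3 k2 k1 k0 P Q r t : R) : Prop :=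
  [/\ k3 = P + r, k2 = Q + t + P * r, k1 = P * t + r * Q & k0 = Q * t].

Lemma quartic_factorsE (k3 k2 k1 k0 P Q r t : R) z :
  quartic_factors k3 k2 k1 k0 P Q r t ->
  quartic k3 k2 k1 k0 z = quadratic P Q z * quadratic r t z.
Proof. by case=> -> -> -> ->; rewrite /quartic /quadratic !(rmorphD, rmorphM); ring. Qed.

Lemma hurwitz_quartic_factors (k3 k2 k1 k0 P Q r t : R) :
  quartic_factors k3 k2 k1 k0 P Q r t ->
  hurwitz (quartic k3 k2 k1 k0) <-> (0 < P /\ 0 < Q) /\ (0 < r /\ 0 < t).
Proof.
move=> fact; rewrite -!hurwitz_quadratic; split=> [H|[HPQ Hrt] z].
  by split=> z z_root; apply: H; rewrite (quartic_factorsE z fact) z_root ?mul0r ?mulr0.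
rewrite (quartic_factorsE z fact) => /eqP; rewrite mulf_eq0.
by case/orP=> /eqP; [exact: HPQ|exact: Hrt].
Qed.

Lemma quartic_factors_pos_root (k3 k2 k1 k0 P Q r t : R) :
  quartic_factors k3 k2 k1 k0 P Q r t ->
  (exists2 l, 0 < l & l ^+ 2 + P * l + Q = 0 \/ l ^+ 2 + r * l + t = 0) ->
  exists z, quartic k3 k2 k1 k0 z = 0 /\ 0 < complex.Re z.
Proof.
move=> fact [l l_gt0 root]; exists l%:C; split => //.
rewrite (quartic_factorsE _ fact) !quadratic_real.
by case: root => ->; rewrite rmorph0 ?mul0r ?mulr0.
Qed.

Lemma quartic_factors_of_nonreal_root (k3 k2 k1 k0 a b : R) : b != 0 ->
  quartic k3 k2 k1 k0 (Complex a b) = 0 ->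
  exists P Q r t, quartic_factors k3 k2 k1 k0 P Q r t.
Proof.
move=> b_neq0; rewrite quarticE => -[re_eq im_eq].
pose P := - (2 * a); pose Q := a ^+ 2 + b ^+ 2; pose r := k3 - P; pose t := k2 - Q - P * r.
have k1_eq : k1 - (P * t + r * Q) = 0.
  have : (k1 - (P * t + r * Q)) * b = 0 by rewrite -im_eq /t /r /Q /P; ring.
  by move/eqP; rewrite mulf_eq0 (negPf b_neq0) orbF => /eqP.
have k0_eq : k0 - Q * t = 0.
  by rewrite -re_eq -[LHS]addr0 -(mulr0 a) -k1_eq /t /r /Q /P; ring.
exists P, Q, r, t; split; rewrite /t /r //; [ring|ring| |];
  by apply/eqP; rewrite -subr_eq0 ?k1_eq ?k0_eq.
Qed.

Lemma quartic_factors_exist (k3 k2 k1 k0 : R) :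
  exists P Q r t, quartic_factors k3 k2 k1 k0 P Q r t.
Proof.
have [[a b] root] : exists z, quartic k3 k2 k1 k0 z = 0.
  have [z z4] := @solve_monicpoly R[i] 4
    (fun i => - nth 0 [:: k0%:C; k1%:C; k2%:C; k3%:C] i) isT.
  by exists z; rewrite /quartic z4 !big_ord_recr big_ord0 /=; ring.
have [b0|b_neq0] := eqVneq b 0; last exact: quartic_factors_of_nonreal_root root.
(* a real root [a]: divide by z - a and look for a root of the cubic quotient *)
subst b; pose e2 := k3 + a; pose e1 := k2 + a * e2; pose e0 := k1 + a * e1.
have a_root : k0 + a * e0 = 0.
  by move: root; rewrite quarticE => -[<- _]; rewrite /e0 /e1 /e2; ring.
have [[c d] c_root] : exists z, z ^+ 3 + e2%:C * z ^+ 2 + e1%:C * z + e0%:C = 0.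
  have [z z3] := @solve_monicpoly R[i] 3 (fun i => - nth 0 [:: e0%:C; e1%:C; e2%:C] i) isT.
  by exists z; rewrite z3 !big_ord_recr big_ord0 /=; ring.
have [d0|d_neq0] := eqVneq d 0; last first.
  apply: (quartic_factors_of_nonreal_root (a := c) d_neq0).
  have -> : quartic k3 k2 k1 k0 (Complex c d) =
    (Complex c d - a%:C) * (Complex c d ^+ 3 + e2%:C * Complex c d ^+ 2
      + e1%:C * Complex c d + e0%:C) + (k0 + a * e0)%:C.
    by rewrite /quartic /e0 /e1 /e2 !(rmorphD, rmorphM); ring.
  by rewrite c_root a_root mulr0 add0r.
subst d; have {}c_root : e0 + c * (e1 + c * (e2 + c)) = 0.
  move: c_root; rewrite -[Complex c 0]/(c%:C) -!(rmorphXn, rmorphM, rmorphD).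
  by move=> /complexI <-; ring.
exists (- (a + c)), (a * c), (e2 + c), (e1 + c * (e2 + c)).
split; [by rewrite /e2; ring|by rewrite /e1 /e2; ring| |].
  apply/eqP; rewrite -subr_eq0 -[X in _ == X]c_root; apply/eqP.
  by rewrite /e0 /e1 /e2; ring.
apply/eqP; rewrite -subr_eq0.
have -> : k0 - a * c * (e1 + c * (e2 + c)) =
          (k0 + a * e0) - a * (e0 + c * (e1 + c * (e2 + c))) by rewrite /e0; ring.
by rewrite a_root c_root mulr0 subr0.
Qed.

Lemma hurwitz_quartic (k3 k2 k1 k0 : R) :
  hurwitz (quartic k3 k2 k1 k0) <->
  [/\ 0 < k3, 0 < k1, 0 < k0 & k1 ^+ 2 + k3 ^+ 2 * k0 < k1 * k2 * k3].
Proof.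
have [P [Q [r [t fact]]]] := quartic_factors_exist k3 k2 k1 k0.
rewrite (hurwitz_quartic_factors fact); case: fact => -> -> -> ->.
have hurwitz_gap : (P * t + r * Q) * (Q + t + P * r) * (P + r)
    - ((P * t + r * Q) ^+ 2 + (P + r) ^+ 2 * (Q * t))
  = P * r * ((Q - t) ^+ 2 + (P + r) * (P * t + r * Q)) by ring.
split=> [[[P_gt0 Q_gt0] [r_gt0 t_gt0]]|[k3_gt0 k1_gt0 k0_gt0]].
  have k1_gt0 : 0 < P * t + r * Q by nra.
  split; [nra|done|nra|].
  by rewrite -subr_gt0 hurwitz_gap; apply: mulr_gt0; have := sqr_ge0 (Q - t); nra.
rewrite -subr_gt0 hurwitz_gap => gap_gt0.
have X_gt0 : 0 < (Q - t) ^+ 2 + (P + r) * (P * t + r * Q).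
  by have := sqr_ge0 (Q - t); nra.
have Pr_gt0 : 0 < P * r by rewrite -(pmulr_lgt0 _ X_gt0).
have P_gt0 : 0 < P by nra.
have r_gt0 : 0 < r by nra.
by split; split; nra.
Qed.

Definition char4_factors (m : nat -> nat -> R) :=
  quartic_factors (- pminors1 m) (pminors2 m) (- pminors3 m) (pminors4 m).

End Hurwitz.

Section Eigenvalues.
Variable R : realType.
Local Open Scope complex_scope.

Lemma eigenvalue_cplx_mx4 (m : nat -> nat -> R) (z : R[i]) :
  eigenvalue (cplx_mx (\matrix_(i < 4, j < 4) m i j)) z <-> char4 m z = 0.
Proof.
rewrite /eigenvalue /eigenspace kermx_eq0 row_free_unit unitmxE unitfE negbK.
have -> : cplx_mx (\matrix_(i < 4, j < 4) m i j) - z%:M =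
          \matrix_(i < 4, j < 4) ((m i j)%:C - z *+ (i == j)%N).
  by apply/matrixP => i j; rewrite !mxE.
rewrite (det_mx4_sub_scalar (fun i j => (m i j)%:C)).
have [-> -> -> ->] := pminors_rmorph (real_complex R) m.
suff -> : z ^+ 4 - (pminors1 m)%:C * z ^+ 3 + (pminors2 m)%:C * z ^+ 2
          - (pminors3 m)%:C * z + (pminors4 m)%:C = char4 m z by split => /eqP.
by rewrite /char4 /quartic !rmorphN; ring.
Qed.

End Eigenvalues.

Lemma inord_eq n (j : 'I_n.+1) k : (k < n.+1)%N -> (inord k == j) = (k == j).
Proof. by move=> k_lt; rewrite -val_eqE /= inordK. Qed.

Section Model.
Variable R : realType.
Variables a1 a2 b2 b3 b4 d1 d2 d4 : R.
Local Notation F := (rhs a1 a2 b2 b3 b4 d1 d2 d4).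

Definition rhs_jac (x1 x2 x3 x4 : R) (i j : nat) : R :=
  nth 0 (nth [::] [::
    [:: 1 - 2 * x1 - a1 * x2 - d1 * x3; - (a1 * x1); - (d1 * x1); 0];
    [:: - (b2 * a2 * x2); b2 * (1 - 2 * x2 - a2 * x1 - d2 * x4); 0; - (b2 * d2 * x2)];
    [:: 0; b3; - b3; 0];
    [:: 0; - (b4 * d4 * x4); 0; - (b4 * (1 + d4 * x2))]] i) j.

Lemma jacobian_rhs (x1 x2 x3 x4 : R) :
  Defs.jacobian F (pt4 x1 x2 x3 x4) = \matrix_(i < 4, j < 4) rhs_jac x1 x2 x3 x4 i j.
Proof.
apply/matrixP => i j; rewrite !mxE.
case: i => [[|[|[|[|i]]]] Hi] //; case: j => [[|[|[|[|j]]]] Hj] //;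
  rewrite /rhs /upd /pt4 /= !inord_eq //= !inordK //= derive1E derive_val;
  by rewrite /GRing.scale /rhs_jac /=; ring.
Qed.

Lemma lin_stable_pt4 (x1 x2 x3 x4 : R) :
  lin_stable F (pt4 x1 x2 x3 x4) <-> hurwitz (char4 (rhs_jac x1 x2 x3 x4)).
Proof.
rewrite /lin_stable jacobian_rhs.
by split=> H z z_root; apply: H; apply/eigenvalue_cplx_mx4.
Qed.

Lemma lin_unstable_pt4 (x1 x2 x3 x4 : R) :
  (exists z, char4 (rhs_jac x1 x2 x3 x4) z = 0 /\ 0 < complex.Re z) ->
  lin_unstable F (pt4 x1 x2 x3 x4).
Proof.
move=> [z [z_root Re_gt0]]; exists z.
by rewrite jacobian_rhs; split => //; apply/eigenvalue_cplx_mx4.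
Qed.

Lemma steady_state_pt4 (x1 x2 x3 x4 : R) :
  x1 * (1 - x1 - a1 * x2 - d1 * x3) = 0 ->
  b2 * x2 * (1 - x2 - a2 * x1 - d2 * x4) = 0 ->
  b3 * (x2 - x3) = 0 ->
  b4 * (1 - x4 - d4 * x4 * x2) = 0 ->
  steady_state F (pt4 x1 x2 x3 x4).
Proof. by move=> F1 F2 F3 F4 [[|[|[|[|i]]]] Hi] //; rewrite /rhs /pt4 /= !inordK. Qed.

Lemma rhs_jac_nullcline (x1 x2 x3 x4 : R) : 1 - x2 - a2 * x1 - d2 * x4 = 0 ->
  rhs_jac x1 x2 x3 x4 1 1 = - (b2 * x2).
Proof.
move=> nullcline; rewrite /rhs_jac /=.
have -> : 1 - 2 * x2 - a2 * x1 - d2 * x4 = (1 - x2 - a2 * x1 - d2 * x4) - x2 by ring.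
by rewrite nullcline; ring.
Qed.

End Model.

Section SteadyStates.
Variable R : realType.
Variables a1 a2 b2 b3 b4 d1 d2 d4 : R.
(* lra and nra do not use section hypotheses: they are passed to them explicitly. *)
Hypotheses (ha1 : 0 < a1) (ha2 : 0 < a2) (hb2 : 0 < b2) (hb3 : 0 < b3)
  (hb4 : 0 < b4) (hd1 : 0 < d1) (hd2 : 0 < d2) (hd4 : 0 < d4).
Local Notation F := (rhs a1 a2 b2 b3 b4 d1 d2 d4).
Local Notation J := (rhs_jac a1 a2 b2 b3 b4 d1 d2 d4).
Local Notation s := (a1 + d1).
Local Notation A := (1 - a2 * (a1 + d1)).
Local Notation B := (A + d4 * (a2 - 1)).
Local Notation D4 := ((A - d4 * (a2 - 1)) ^+ 2 - 4 * d2 * d4 * A).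

Local Ltac pos := repeat first [assumption | exact: ltr01 | apply: addr_gt0 | apply: mulr_gt0
  | apply: exprn_gt0 | rewrite invr_gt0].

Lemma ss1_unstable : steady_state F (pt4 0 0 0 1) /\ lin_unstable F (pt4 0 0 0 1).
Proof.
split; first by apply: steady_state_pt4; ring.
apply: lin_unstable_pt4; exists (1%:C)%C; split => //.
rewrite /char4 quartic_real -[RHS]/((0%:C)%C); congr (_%:C)%C.
by rewrite /pminors1 /pminors2 /pminors3 /pminors4 /minor2 /minor3 /rhs_jac /=; ring.
Qed.

Lemma ss2_stability :
  steady_state F (pt4 1 0 0 1) /\ (lin_stable F (pt4 1 0 0 1) <-> 1 < a2 + d2).
Proof.
split; first by apply: steady_state_pt4; ring.
pose mu := b2 * (1 - a2 - d2).
have fact : char4_factors (J 1 0 0 1) (1 - mu) (- mu) (b3 + b4) (b3 * b4).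
  rewrite /char4_factors /pminors1 /pminors2 /pminors3 /pminors4 /minor2 /minor3.
  by rewrite /rhs_jac /mu /=; split; ring.
have mu_lt0 : mu < 0 <-> 1 < a2 + d2 by rewrite /mu pmulr_rlt0 //; split; lra.
rewrite lin_stable_pt4 (hurwitz_quartic_factors fact) -mu_lt0.
split=> [[[_ ?] _]|?]; first lra.
by split; split; [lra|lra|exact: addr_gt0|exact: mulr_gt0].
Qed.

Lemma ss3_state (x : R) :
  (2 * d4 * x - (d4 - 1)) ^+ 2 = (1 + d4) ^+ 2 - 4 * d2 * d4 ->
  let w : R := 1 + d4 * x in
  let g : R := 1 - s * x in
  steady_state F (pt4 0 x x w^-1) /\
  char4_factors (J 0 x x w^-1) (b3 - g) (- (g * b3)) (b2 * x + b4 * w)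
    (b2 * b4 * x * (2 * d4 * x - (d4 - 1))).
Proof.
move=> r_sq w g.
have nullcline : (1 - x) * w = d2.
  have discr : (1 + d4) ^+ 2 - 4 * d2 * d4 = (- (d4 - 1)) ^+ 2 - 4 * d4 * (d2 - 1) by ring.
  have root := quadratic_root_of_discr (lt0r_neq0 hd4) (etrans r_sq discr) (erefl _).
  by rewrite -[RHS]subr0 -root /w; ring.
have w_neq0 : w != 0 by apply: contraTneq hd2 => w0; rewrite -nullcline w0 mulr0 ltxx.
have d2_w : d2 * w^-1 = 1 - x by rewrite -nullcline mulfK.
have u2_nullcline : 1 - x - a2 * 0 - d2 * w^-1 = 0 by rewrite d2_w; ring.
split.
  apply: steady_state_pt4; [ring|by rewrite u2_nullcline mulr0|ring|].
  have -> : 1 - w^-1 - d4 * w^-1 * x = 1 - w^-1 * w by rewrite /w; ring.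
  by rewrite mulVf // subrr mulr0.
have -> : 2 * d4 * x - (d4 - 1) = w - d4 * (d2 * w^-1) by rewrite d2_w /w; ring.
rewrite /char4_factors /pminors1 /pminors2 /pminors3 /pminors4 /minor2 /minor3.
rewrite rhs_jac_nullcline; last exact: u2_nullcline.
by rewrite /rhs_jac /g /w /=; split; ring.
Qed.

Lemma ss3m_unstable :
  let D3 := (1 + d4) ^+ 2 - 4 * d2 * d4 in
  let u2m : R := (d4 - 1 - Num.sqrt D3) / (2 * d4) in
  let P3m := pt4 0 u2m u2m (1 + d4 * u2m)^-1 in
  0 < D3 -> steady_state F P3m /\ lin_unstable F P3m.
Proof.
move=> D3 x P3m D3_gt0.
have r_def : 2 * d4 * x - (d4 - 1) = - Num.sqrt D3 by rewrite /x; field; exact: lt0r_neq0.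
have := ss3_state (x := x); rewrite r_def sqrrN sqr_sqrtr ?ltW // => /(_ erefl) [ss fact].
split => //; apply/lin_unstable_pt4/(quartic_factors_pos_root fact); clearbody x.
have [g_gt0|g_le0] := ltrP 0 (1 - s * x); first by exists (1 - s * x); [|left; ring].
have x_gt0 : 0 < x by rewrite -(pmulr_rgt0 _ (addr_gt0 ha1 hd1)); lra.
have t_lt0 : b2 * b4 * x * - Num.sqrt D3 < 0 by rewrite mulrN oppr_lt0 !mulr_gt0 // sqrtr_gt0.
have [l l_gt0 l_root] := quadratic_pos_root (b2 * x + b4 * (1 + d4 * x)) t_lt0.
by exists l; last right.
Qed.

Lemma ss3p_criterion (sq : R) : 0 <= sq -> sq ^+ 2 = (1 + d4) ^+ 2 - 4 * d2 * d4 ->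
  let x := (d4 - 1 + sq) / (2 * d4) in
  let T := (s + d4) * (s - 1) / s ^+ 2 in
  (1 < s * x /\ 0 < sq) <->
  (d2 < T \/ ((T <= d2 /\ d2 < (1 + d4) ^+ 2 / (4 * d4)) /\ 1 / d4 < (s - 2) / s)).
Proof.
move=> sq_ge0 sq_sq x T.
have s_gt0 : 0 < s by exact: addr_gt0.
pose m := s + 2 * d4 - s * d4.
have x_crit : (1 < s * x) = (m < s * sq).
  by rewrite /x mulrA ltr_pdivlMr ?mulr_gt0 // /m; apply/idP/idP => ?; lra.
have T_crit : (d2 < T) = (m ^+ 2 < (s * sq) ^+ 2).
  have key : (s * sq) ^+ 2 - m ^+ 2 = 4 * d4 * ((s + d4) * (s - 1) - d2 * s ^+ 2).
    by rewrite exprMn sq_sq /m; ring.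
  by rewrite -[RHS]subr_gt0 key pmulr_rgt0 ?mulr_gt0 // subr_gt0 /T ltr_pdivlMr ?exprn_gt0.
have bound_crit : (d2 < (1 + d4) ^+ 2 / (4 * d4)) = (0 < s * sq).
  rewrite pmulr_rgt0 // -[RHS](ltr_pXn2r (_ : 0 < 2)%N) ?nnegrE // expr0n /= sq_sq.
  by rewrite ltr_pdivlMr ?mulr_gt0 //; apply/idP/idP => ?; lra.
have neg_crit : (1 / d4 < (s - 2) / s) = (m < 0).
  by rewrite ltr_pdivlMr // mulrAC ltr_pdivrMr // /m; apply/idP/idP => ?; lra.
rewrite x_crit T_crit bound_crit neg_crit leNgt T_crit.
have -> : (0 < sq) = (0 < s * sq) by rewrite pmulr_rgt0.
rewrite lt_sqr_or_neg; last by rewrite mulr_ge0 // ltW.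
case: (m ^+ 2 < _); first by split=> _; left.
by split=> [[//|[r_gt0 m_lt0]]|[//|[[_ r_gt0] m_lt0]]]; right.
Qed.

Lemma ss3p_stability :
  let D3 := (1 + d4) ^+ 2 - 4 * d2 * d4 in
  let u2p : R := (d4 - 1 + Num.sqrt D3) / (2 * d4) in
  let P3p := pt4 0 u2p u2p (1 + d4 * u2p)^-1 in
  let T := (s + d4) * (s - 1) / s ^+ 2 in
  0 <= D3 -> steady_state F P3p /\
    (lin_stable F P3p <->
       d2 < T \/ ((T <= d2 /\ d2 < (1 + d4) ^+ 2 / (4 * d4)) /\ 1 / d4 < (s - 2) / s)).
Proof.
move=> D3 x P3p T D3_ge0.
have sD_ge0 := sqrtr_ge0 D3; have sD_sq := sqr_sqrtr D3_ge0.
have r_def : 2 * d4 * x - (d4 - 1) = Num.sqrt D3 by rewrite /x; field; exact: lt0r_neq0.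
have := ss3_state (x := x); rewrite r_def sD_sq => /(_ erefl) [ss fact].
split => //; rewrite lin_stable_pt4 (hurwitz_quartic_factors fact).
apply: iff_trans (ss3p_criterion sD_ge0 sD_sq); rewrite -/x; clearbody x.
have x_gt0 : 1 < s * x -> 0 < x by rewrite -(pmulr_rgt0 _ (addr_gt0 ha1 hd1)); lra.
split=> [[[_ g_lt0] [_ t_gt0]]|[sx_gt1 sD_gt0]].
  have sx_gt1 : 1 < s * x by move: g_lt0; rewrite -mulNr pmulr_lgt0 //; lra.
  by split => //; move: t_gt0; rewrite pmulr_rgt0 //; pos; exact: x_gt0.
have x_pos := x_gt0 sx_gt1; split; split; [have := hb3; lra|rewrite -mulNr; pos; lra|pos|pos].
Qed.

Definition ss4_c3 (x : R) : R :=
  let v := 1 - s * x in let w := 1 + d4 * x in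
  v + b3 + b2 * x + b4 * w.

Definition ss4_c2 (x : R) : R :=
  let v := 1 - s * x in let w := 1 + d4 * x in
  b3 * (b2 * x + b4 * w) + v * (b3 + b4 * w + b2 * x * (1 - a2 * a1))
  + b2 * b4 * x / w * (w ^+ 2 - d2 * d4).

Definition ss4_c1 (x : R) : R :=
  let v := 1 - s * x in let w := 1 + d4 * x in
  v * (b2 * b4 * x / w * (w ^+ 2 * (1 - a2 * a1) - d2 * d4) + b3 * b4 * w)
  + b2 * b3 * x * v * A + b2 * b3 * b4 * x / w * (w ^+ 2 - d2 * d4).

Definition ss4_c0 (x : R) : R :=
  let v := 1 - s * x in let w := 1 + d4 * x in
  b2 * b3 * b4 * x / w * v * (w ^+ 2 * A - d2 * d4).

Lemma ss4_state (x : R) : A != 0 ->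
  (2 * d4 * A * x + B) ^+ 2 = D4 ->
  let v : R := 1 - s * x in
  let w : R := 1 + d4 * x in
  [/\ w != 0, steady_state F (pt4 v x x w^-1),
      w ^+ 2 * A - d2 * d4 = w * (2 * d4 * A * x + B) &
      char4 (J v x x w^-1) = quartic (ss4_c3 x) (ss4_c2 x) (ss4_c1 x) (ss4_c0 x)].
Proof.
move=> A_neq0 r_sq v w.
have root : d4 * A * x ^+ 2 + B * x + (a2 - 1 + d2) = 0.
  have discr : (A - d4 * (a2 - 1)) ^+ 2 - 4 * d2 * d4 * A =
               B ^+ 2 - 4 * (d4 * A) * (a2 - 1 + d2) by ring.
  apply: (quadratic_root_of_discr _ (etrans r_sq discr)); last by rewrite mulrA.
  exact: mulf_neq0 (lt0r_neq0 hd4) A_neq0.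
have nullcline : (1 - x - a2 * v) * w = d2 by rewrite -[RHS]subr0 -root /v /w; ring.
have w_neq0 : w != 0 by apply: contraTneq hd2 => w0; rewrite -nullcline w0 mulr0 ltxx.
have d2_w : d2 * w^-1 = 1 - x - a2 * v by rewrite -nullcline mulfK.
have u2_nullcline : 1 - x - a2 * v - d2 * w^-1 = 0 by rewrite d2_w subrr.
split=> //.
- apply: steady_state_pt4; [by rewrite /v; ring|by rewrite u2_nullcline mulr0|ring|].
  have -> : 1 - w^-1 - d4 * w^-1 * x = 1 - w^-1 * w by rewrite /w; ring.
  by rewrite mulVf // subrr mulr0.
- apply/eqP; rewrite -subr_eq0; apply/eqP.
  by rewrite -[RHS](mulr0 (- d4)) -root /w; ring.
rewrite /char4 /pminors1 /pminors2 /pminors3 /pminors4 /minor2 /minor3.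
rewrite rhs_jac_nullcline; last exact: u2_nullcline.
rewrite /rhs_jac /ss4_c3 /ss4_c2 /ss4_c1 /ss4_c0 /= -/v -/w.
by congr quartic; rewrite /v; field.
Qed.

Lemma ss4_root (r : R) : A != 0 ->
  2 * d4 * A * ((- A - d4 * (a2 - 1) + r) / (2 * d4 * A)) + B = r.
Proof. by move=> A_neq0; field; rewrite A_neq0 lt0r_neq0. Qed.

Lemma ss4m_not_stable :
  let um : R := (- A - d4 * (a2 - 1) - Num.sqrt D4) / (2 * d4 * A) in
  let P4m := pt4 (1 - s * um) um um (1 + d4 * um)^-1 in
  A != 0 -> 0 <= D4 ->
  steady_state F P4m /\
    ((0 < 1 - s * um /\ 0 < um /\ 0 < (1 + d4 * um)^-1) -> ~ lin_stable F P4m).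
Proof.
move=> x P4m A_neq0 D4_ge0.
have r_def := ss4_root (- Num.sqrt D4) A_neq0; rewrite -/x in r_def; clearbody x.
have [|w_neq0 ss w_eq char_eq] := ss4_state A_neq0 (x := x).
  by rewrite r_def sqrrN sqr_sqrtr.
split=> // -[v_gt0 [x_gt0 _]].
rewrite lin_stable_pt4 char_eq hurwitz_quartic => -[_ _].
rewrite /ss4_c0 /= w_eq r_def.
have -> : b2 * b3 * b4 * x / (1 + d4 * x) * (1 - s * x) * ((1 + d4 * x) * - Num.sqrt D4) =
          - (b2 * b3 * b4 * x * (1 - s * x) * Num.sqrt D4) by field.
by rewrite oppr_gt0 ltNge mulr_ge0 ?sqrtr_ge0 // ltW //; pos.
Qed.

Lemma ss4_A_pos (x : R) : A != 0 -> 0 < x ->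
  0 <= 2 * d4 * A * x + B -> (2 * d4 * A * x + B) ^+ 2 = D4 -> 0 < A.
Proof.
move=> A_neq0 x_gt0; set r := 2 * d4 * A * x + B => r_ge0 r_sq.
rewrite lt_neqAle eq_sym A_neq0 leNgt /=; apply/negP => A_lt0.
have dA_lt0 : d4 * A < 0 by rewrite pmulr_rlt0.
have r_lt_B : r < B by rewrite /r; nra.
have D4E : D4 = B ^+ 2 - 4 * (d4 * A) * (a2 - 1 + d2) by ring.
have : r ^+ 2 < B ^+ 2 by nra.
rewrite r_sq D4E => rB; have C_lt0 : a2 - 1 + d2 < 0 by nra.
have := hd4; have := hd2; nra.
Qed.

Lemma ss4p_stability :
  let up : R := (- A - d4 * (a2 - 1) + Num.sqrt D4) / (2 * d4 * A) in
  let P4p := pt4 (1 - s * up) up up (1 + d4 * up)^-1 in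
  A != 0 -> 0 <= D4 ->
  steady_state F P4p /\
    (lin_stable F P4p <->
       ((0 < s * up /\ s * up < 1) /\
        (0 < d2 /\ d2 < (A - d4 * (a2 - 1)) ^+ 2 / (4 * d4 * A)) /\
        ss4_c3 up ^+ 2 * ss4_c0 up + ss4_c1 up ^+ 2 < ss4_c1 up * ss4_c2 up * ss4_c3 up)).
Proof.
move=> x P4p A_neq0 D4_ge0.
have r_def := ss4_root (Num.sqrt D4) A_neq0; rewrite -/x in r_def; clearbody x.
have sq_ge0 := sqrtr_ge0 D4; have sq_sq := sqr_sqrtr D4_ge0.
have [|w_neq0 ss w_eq char_eq] := ss4_state A_neq0 (x := x); first by rewrite r_def.
split => //; rewrite lin_stable_pt4 char_eq hurwitz_quartic (addrC (ss4_c1 x ^+ 2)).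
have c0E : ss4_c0 x = b2 * b3 * b4 * (x * (1 - s * x) * Num.sqrt D4).
  by rewrite /ss4_c0 /= w_eq r_def; field.
have D4_crit : 0 < A -> (d2 < (A - d4 * (a2 - 1)) ^+ 2 / (4 * d4 * A)) = (0 < Num.sqrt D4).
  move=> A_gt0; rewrite ltr_pdivlMr ?mulr_gt0 //.
  rewrite -[RHS](ltr_pXn2r (_ : 0 < 2)%N) ?nnegrE // expr0n /= sq_sq.
  by apply/idP/idP => ?; lra.
split=> [[c3_gt0 c1_gt0 c0_gt0 RH]|[[sx_gt0 sx_lt1] [[_ d2_lt] RH]]].
  have xvsq_gt0 : 0 < x * (1 - s * x) * Num.sqrt D4.
    by move: c0_gt0; rewrite c0E pmulr_rgt0 //; pos.
  have sq_gt0 : 0 < Num.sqrt D4.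
    by rewrite lt0r sq_ge0 andbT; apply: contraTneq xvsq_gt0 => ->; rewrite mulr0 ltxx.
  have xv_gt0 : 0 < x * (1 - s * x) by rewrite -(pmulr_lgt0 _ sq_gt0).
  have x_gt0 : 0 < x.
    rewrite ltNge; apply/negP => x_le0.
    have : s * x <= 0 by rewrite pmulr_rle0 // addr_gt0.
    nra.
  have A_gt0 : 0 < A by apply: (ss4_A_pos A_neq0 x_gt0); rewrite r_def.
  have v_gt0 : 0 < 1 - s * x by rewrite -(pmulr_rgt0 _ x_gt0).
  split; first by split; [exact: mulr_gt0 (addr_gt0 ha1 hd1) x_gt0|lra].
  by split; [split; [|rewrite D4_crit]|].
have x_gt0 : 0 < x by rewrite -(pmulr_rgt0 _ (addr_gt0 ha1 hd1)).
have v_gt0 : 0 < 1 - s * x by lra.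
have A_gt0 : 0 < A.
  rewrite lt_neqAle eq_sym A_neq0 leNgt /=; apply/negP => A_lt0.
  have : d2 * (4 * d4 * A) < 0 by rewrite pmulr_rlt0 // pmulr_rlt0 ?mulr_gt0.
  move: d2_lt; rewrite ltr_ndivlMr ?pmulr_rlt0 ?mulr_gt0 //.
  by have := sqr_ge0 (A - d4 * (a2 - 1)); lra.
have sq_gt0 : 0 < Num.sqrt D4 by rewrite -D4_crit.
have P_gt0 : 0 < (1 + d4 * x) ^+ 2 * A - d2 * d4 by rewrite w_eq r_def; pos.
have P1_gt0 : 0 < (1 + d4 * x) ^+ 2 * (1 - a2 * a1) - d2 * d4.
  have -> : (1 + d4 * x) ^+ 2 * (1 - a2 * a1) - d2 * d4 =
            ((1 + d4 * x) ^+ 2 * A - d2 * d4) + (1 + d4 * x) ^+ 2 * (a2 * d1) by ring.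
  by pos.
have P2_gt0 : 0 < (1 + d4 * x) ^+ 2 - d2 * d4.
  have -> : (1 + d4 * x) ^+ 2 - d2 * d4 =
            ((1 + d4 * x) ^+ 2 * A - d2 * d4) + (1 + d4 * x) ^+ 2 * (a2 * s) by ring.
  by pos.
by split; [rewrite /ss4_c3 /=; pos|rewrite /ss4_c1 /=; pos|rewrite c0E; pos|].
Qed.

End SteadyStates.

Theorem lemmaC1 (R : realType) (a1 a2 b2 b3 b4 d1 d2 d4 : R)
  (ha1 : 0 < a1) (ha2 : 0 < a2) (hb2 : 0 < b2) (hb3 : 0 < b3)
  (hb4 : 0 < b4) (hd1 : 0 < d1) (hd2 : 0 < d2) (hd4 : 0 < d4) :
  let F := rhs a1 a2 b2 b3 b4 d1 d2 d4 in
  let s := a1 + d1 in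
  (* SS1 *)
  (steady_state F (pt4 0 0 0 1) /\ lin_unstable F (pt4 0 0 0 1)) /\
  (* SS2 *)
  (steady_state F (pt4 1 0 0 1) /\
     (lin_stable F (pt4 1 0 0 1) <-> 1 < a2 + d2)) /\
  (* SS3 *)
  (let D3 := (1 + d4) ^+ 2 - 4 * d2 * d4 in
   let u2p := (d4 - 1 + Num.sqrt D3) / (2 * d4) in
   let u2m := (d4 - 1 - Num.sqrt D3) / (2 * d4) in
   let P3p := pt4 0 u2p u2p (1 + d4 * u2p)^-1 in
   let P3m := pt4 0 u2m u2m (1 + d4 * u2m)^-1 in
   let T := (s + d4) * (s - 1) / s ^+ 2 in
   (0 < D3 -> steady_state F P3m /\ lin_unstable F P3m) /\
   (0 <= D3 -> steady_state F P3p /\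
      (lin_stable F P3p <->
         d2 < T \/
         ((T <= d2 /\ d2 < (1 + d4) ^+ 2 / (4 * d4)) /\ 1 / d4 < (s - 2) / s)))) /\
  (* SS4 *)
  (let A := 1 - a2 * s in
   let D4 := (A - d4 * (a2 - 1)) ^+ 2 - 4 * d2 * d4 * A in
   let up := (- A - d4 * (a2 - 1) + Num.sqrt D4) / (2 * d4 * A) in
   let um := (- A - d4 * (a2 - 1) - Num.sqrt D4) / (2 * d4 * A) in
   let P4p := pt4 (1 - s * up) up up (1 + d4 * up)^-1 in
   let P4m := pt4 (1 - s * um) um um (1 + d4 * um)^-1 in
   let v := 1 - s * up in
   let w := 1 + d4 * up in
   let c3 := v + b3 + b2 * up + b4 * w in
   let c2 := b3 * (b2 * up + b4 * w)
             + v * (b3 + b4 * w + b2 * up * (1 - a2 * a1))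
             + b2 * b4 * up / w * (w ^+ 2 - d2 * d4) in
   let c1 := v * (b2 * b4 * up / w * (w ^+ 2 * (1 - a2 * a1) - d2 * d4)
                  + b3 * b4 * w)
             + b2 * b3 * up * v * A
             + b2 * b3 * b4 * up / w * (w ^+ 2 - d2 * d4) in
   let c0 := b2 * b3 * b4 * up / w * v * (w ^+ 2 * A - d2 * d4) in
   A != 0 -> 0 <= D4 ->
   (steady_state F P4m /\
      ((0 < 1 - s * um /\ 0 < um /\ 0 < (1 + d4 * um)^-1) -> ~ lin_stable F P4m)) /\
   (steady_state F P4p /\
      (lin_stable F P4p <->
         ((0 < s * up /\ s * up < 1) /\
          (0 < d2 /\ d2 < (A - d4 * (a2 - 1)) ^+ 2 / (4 * d4 * A)) /\
          c3 ^+ 2 * c0 + c1 ^+ 2 < c1 * c2 * c3)))).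
Proof.
move=> F s; split; first exact: ss1_unstable.
split; first exact: ss2_stability.
split.
  move=> D3 u2p u2m P3p P3m T.
  by split; [exact: ss3m_unstable|exact: ss3p_stability].
move=> A D4 up um P4p P4m v w c3 c2 c1 c0 A_neq0 D4_ge0.
by split; [exact: ss4m_not_stable|exact: ss4p_stability].
Qed.
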